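(* For any term $t$, any context $\Gamma$ and any type $T$ of the Scalar type system: (1) if $\Gamma\vdash(\mathbf 0)\,t:T$ then $T\equiv\overline0$; (2) if $\Gamma\vdash(t)\,\mathbf 0:T$ then $T\equiv\overline0$.
   Context: Fix a commutative ring $(\mathcal{S},+,\times)$. Terms: $t,r ::= b \mid (t)\,r \mid \mathbf{0} \mid \alpha.t \mid t+r$, basis terms $b ::= x \mid \lambda x\,t$, modulo associativity and commutativity of $+$. Types: $T ::= U \mid \forall X.T \mid \alpha.T \mid \overline{0}$; unit types: $U ::= X \mid U\to T \mid \forall X.U$. Type variables are only substituted by unit types; $(\alpha.T)[U/X]=\alpha.T[U/X]$. Type equivalence $\equiv$ is the least congruence with $\alpha.\overline0\equiv\overline0$, $0.T\equiv\overline0$, $1.T\equiv T$, $\alpha.(\beta.T)\equiv(\alpha\times\beta).T$, $\forall X.\alpha.T\equiv\alpha.\forall X.T$. A context is a set of distinct term variables with unit types. Typing rules: (ax) $\Gamma,x:U\vdash x:U$; ($\equiv$) from $\Gamma\vdash t:T$ and $T\equiv S$ infer $\Gamma\vdash t:S$; ($\to_E$) from $\Gamma\vdash t:\alpha.(U\to T)$ and $\Gamma\vdash r:\beta.U$ infer $\Gamma\vdash (t)\,r:(\alpha\times\beta).T$; ($\to_I$) from $\Gamma,x:U\vdash t:T$ infer $\Gamma\vdash\lambda x\,t:U\to T$; ($\forall_E$) from $\Gamma\vdash t:\forall X.T$ infer $\Gamma\vdash t:T[U/X]$, $U$ unit; ($\forall_I$) from $\Gamma\vdash t:T$ with $X$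 not free in $\Gamma$ infer $\Gamma\vdash t:\forall X.T$; ($ax_{\overline0}$) $\Gamma\vdash\mathbf 0:\overline0$; ($+_I$) from $\Gamma\vdash t:\alpha.T$ and $\Gamma\vdash r:\beta.T$ infer $\Gamma\vdash t+r:(\alpha+\beta).T$; ($s_I$) from $\Gamma\vdash t:T$ infer $\Gamma\vdash\alpha.t:\alpha.T$. *)

From mathcomp Require Import all_boot all_algebra.
Set Implicit Arguments. Unset Strict Implicit. Unset Printing Implicit Defensive.
Import GRing.Theory.
Local Open Scope ring_scope.

Section Scalar.
Variable S : comPzRingType.

(* Terms: sterm variables are de Bruijn indices; Lam binds index 0. *)
Inductive sterm : Type :=
| Var : nat -> sterm
| Lam : sterm -> sterm
| App : sterm -> sterm -> sterm       (* (t) r *)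
| Zero : sterm
| Scal : S -> sterm -> sterm
| Plus : sterm -> sterm -> sterm.

(* Raw types: stype variables are de Bruijn indices; TAll binds index 0. *)
Inductive stype : Type :=
| TVar : nat -> stype
| TArr : stype -> stype -> stype
| TAll : stype -> stype
| TScal : S -> stype -> stype
| TZero : stype.

Fixpoint wf_type (T : stype) : bool :=
  match T with
  | TVar _ => true
  | TArr A B => is_unit A && wf_type B
  | TAll T' => wf_type T'
  | TScal _ T' => wf_type T'
  | TZero => true
  end
with is_unit (T : stype) : bool :=
  match T with
  | TVar _ => true
  | TArr A B => is_unit A && wf_type B
  | TAll U => is_unit U
  | _ => false
  end.

Fixpoint tlift (d c : nat) (T : stype) : stype :=
  match T with
  | TVar n => TVar (if (c <= n)%N then (n + d)%N else n)
  | TArr A B => TArr (tlift d c A) (tlift d c B)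
  | TAll T' => TAll (tlift d c.+1 T')
  | TScal a T' => TScal a (tlift d c T')
  | TZero => TZero
  end.

Fixpoint tsubst (k : nat) (U : stype) (T : stype) : stype :=
  match T with
  | TVar n => if n == k then tlift k 0 U
              else if (k < n)%N then TVar n.-1 else TVar n
  | TArr A B => TArr (tsubst k U A) (tsubst k U B)
  | TAll T' => TAll (tsubst k.+1 U T')
  | TScal a T' => TScal a (tsubst k U T')
  | TZero => TZero
  end.

Inductive tequiv : stype -> stype -> Prop :=
| te_refl T : tequiv T T
| te_sym T T' : tequiv T T' -> tequiv T' T
| te_trans T1 T2 T3 : tequiv T1 T2 -> tequiv T2 T3 -> tequiv T1 T3
| te_arr A A' B B' : tequiv A A' -> tequiv B B' -> tequiv (TArr A B) (TArr A' B')
| te_all T T' : tequiv T T' -> tequiv (TAll T) (TAll T')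
| te_scal a T T' : tequiv T T' -> tequiv (TScal a T) (TScal a T')
| te_scal_zero a : tequiv (TScal a TZero) TZero
| te_zero_scal T : tequiv (TScal 0 T) TZero
| te_one T : tequiv (TScal 1 T) T
| te_mul a b T : tequiv (TScal a (TScal b T)) (TScal (a * b) T)
| te_all_scal a T : tequiv (TAll (TScal a T)) (TScal a (TAll T)).

Inductive term_ac : sterm -> sterm -> Prop :=
| ac_refl t : term_ac t t
| ac_sym t t' : term_ac t t' -> term_ac t' t
| ac_trans t1 t2 t3 : term_ac t1 t2 -> term_ac t2 t3 -> term_ac t1 t3
| ac_lam t t' : term_ac t t' -> term_ac (Lam t) (Lam t')
| ac_app t t' r r' : term_ac t t' -> term_ac r r' -> term_ac (App t r) (App t' r')
| ac_scal a t t' : term_ac t t' -> term_ac (Scal a t) (Scal a t')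
| ac_plus t t' r r' : term_ac t t' -> term_ac r r' -> term_ac (Plus t r) (Plus t' r')
| ac_comm t r : term_ac (Plus t r) (Plus r t)
| ac_assoc t r s : term_ac (Plus (Plus t r) s) (Plus t (Plus r s)).

(* Contexts: de Bruijn lists of unit types (index i = i-th variable). *)
Definition scontext := seq stype.
Definition is_context (G : scontext) : bool := all is_unit G.

Inductive typing : scontext -> sterm -> stype -> Prop :=
| ty_ax G n : (n < size G)%N -> typing G (Var n) (nth TZero G n)
| ty_equiv G t T T' : typing G t T -> tequiv T T' -> wf_type T' -> typing G t T'
| ty_arrE G t r a b U T :
    typing G t (TScal a (TArr U T)) -> typing G r (TScal b U) ->
    typing G (App t r) (TScal (a * b) T)
| ty_arrI G t U T : is_unit U -> typing (U :: G) t T -> typing G (Lam t) (TArr U T)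
| ty_allE G t T U : typing G t (TAll T) -> is_unit U -> typing G t (tsubst 0 U T)
| ty_allI G t T : typing (map (tlift 1 0) G) t T -> typing G t (TAll T)
| ty_ax0 G : typing G Zero TZero
| ty_plusI G t r a b T :
    typing G t (TScal a T) -> typing G r (TScal b T) ->
    typing G (Plus t r) (TScal (a + b) T)
| ty_sI G t a T : typing G t T -> typing G (Scal a t) (TScal a T)
| ty_ac G t t' T : typing G t T -> term_ac t t' -> typing G t' T.

End Scalar.

From mathcomp Require Import all_boot all_algebra.
Set Implicit Arguments. Unset Strict Implicit. Unset Printing Implicit Defensive.
Import GRing.Theory.
Local Open Scope ring_scope.

(* Every type T is equivalent to [tscalar T].[tbody T], and the scalar factor
   [tscalar T] is invariant under type equivalence and under instantiation of
   quantifiers by unit types, whose factor is 1.  Hence it is a typing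
   invariant: any type of 0 has factor 0, and the factor of an application is
   the product of the factors of its function and argument types.  A type
   with factor 0 is equivalent to 0.[tbody T], that is to the zero type. *)

Section ScalarFactor.
Variable S : comPzRingType.

Fixpoint tscalar (T : stype S) : S :=
  match T with
  | TZero => 0
  | TScal a T' => a * tscalar T'
  | TAll T' => tscalar T'
  | _ => 1
  end.

Fixpoint tbody (T : stype S) : stype S :=
  match T with
  | TScal _ T' => tbody T'
  | TAll T' => TAll (tbody T')
  | T' => T'
  end.

Lemma tscalar_tequiv (T T' : stype S) : tequiv T T' -> tscalar T = tscalar T'.
Proof.
elim=> //=; try congruence.
- by move=> a; rewrite mulr0.
- by move=> T0; rewrite mul0r.
- by move=> T0; rewrite mul1r.
- by move=> a b T0; rewrite mulrA.
Qed.

Lemma tequiv_scalar_body (T : stype S) : tequiv T (TScal (tscalar T) (tbody T)).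
Proof.
elim: T => /= [n|A _ B _|T IH|a T IH|].
- exact/te_sym/te_one.
- exact/te_sym/te_one.
- exact: te_trans (te_all IH) (te_all_scal _ _).
- exact: te_trans (te_scal a IH) (te_mul _ _ _).
- exact/te_sym/te_zero_scal.
Qed.

Lemma tequiv_zero_of_tscalar0 (T : stype S) : tscalar T = 0 -> tequiv T (TZero S).
Proof.
by move=> T0; apply: te_trans (tequiv_scalar_body T) _; rewrite T0; apply: te_zero_scal.
Qed.

Lemma tscalar_unit (U : stype S) : is_unit U -> tscalar U = 1.
Proof. by elim: U => //= T IH /IH. Qed.

Lemma tscalar_tlift (T : stype S) d c : tscalar (tlift d c T) = tscalar T.
Proof. by elim: T d c => //= a T IH d c; rewrite IH. Qed.

Lemma tscalar_tsubst (U T : stype S) k : is_unit U -> tscalar (tsubst k U T) = tscalar T.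
Proof.
move=> unitU; elim: T k => //= [n|a T IH] k; last by rewrite IH.
by case: eqP => _; [rewrite tscalar_tlift tscalar_unit | case: ifP].
Qed.

Lemma unit_wf_type (U : stype S) : is_unit U -> wf_type U.
Proof. by elim: U. Qed.

Lemma tlift_wf_unit (T : stype S) d c :
  wf_type (tlift d c T) = wf_type T /\ is_unit (tlift d c T) = is_unit T.
Proof.
elim: T d c => //= [A IA B IB|a T IH] d c.
- by rewrite (proj2 (IA d c)) (proj1 (IB d c)).
- by rewrite (proj1 (IH d c)).
Qed.

Lemma tsubst_wf_unit (U T : stype S) k : is_unit U ->
  (wf_type T -> wf_type (tsubst k U T)) /\ (is_unit T -> is_unit (tsubst k U T)).
Proof.
move=> unitU; elim: T k => //= [n|A IA B IB|a T IH] k.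
- case: eqP => _; last by case: ifP.
  by rewrite (proj1 (tlift_wf_unit U k 0)) (proj2 (tlift_wf_unit U k 0)) unitU unit_wf_type.
- by split=> /andP[unitA wfB]; rewrite (proj2 (IA k) unitA) (proj1 (IB k) wfB).
- by split=> // /(proj1 (IH k)).
Qed.

Lemma is_context_tlift (G : scontext S) : is_context G -> is_context (map (tlift 1 0) G).
Proof.
by rewrite /is_context all_map; apply: sub_all => U /=; rewrite (proj2 (tlift_wf_unit U 1 0)).
Qed.

Lemma typing_wf_type (G : scontext S) t T : typing G t T -> is_context G -> wf_type T.
Proof.
elim=> {G t T} //= [G n ltnG ctxG|G t r a b U T _ IH _ _ ctxG|G t U T unitU _ IH ctxG
                   |G t T U _ IH unitU ctxG|G t T _ IH ctxG].
- exact/unit_wf_type/(all_nthP _ ctxG).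
- by case/andP: (IH ctxG).
- by rewrite unitU IH //= unitU.
- exact: (proj1 (tsubst_wf_unit T 0 unitU) (IH ctxG)).
- exact/IH/is_context_tlift.
Qed.

Definition is_zero_term (t : sterm S) : bool := if t is Zero then true else false.

Definition is_zero_app (t : sterm S) : bool :=
  if t is App f r then is_zero_term f || is_zero_term r else false.

Lemma term_ac_zero (t t' : sterm S) : term_ac t t' ->
  is_zero_term t = is_zero_term t' /\ is_zero_app t = is_zero_app t'.
Proof. by elim=> //=; intuition congruence. Qed.

Lemma typing_zero_tscalar (G : scontext S) t T :
  typing G t T -> is_zero_term t -> tscalar T = 0.
Proof.
elim=> {G t T} //= [G t T T' _ IH /tscalar_tequiv <- _ /IH //|G t T U _ IH unitU
                   |G t t' T _ IH /term_ac_zero[<- _] /IH //].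
by move/IH; rewrite tscalar_tsubst.
Qed.

(* Needs the context to be well formed: the argument type [b.U] only forces
   [b = 0] because [U] is a unit type, hence of factor 1. *)
Lemma typing_zero_app_tscalar (G : scontext S) t T :
  typing G t T -> is_context G -> is_zero_app t -> tscalar T = 0.
Proof.
elim=> {G t T} //= [G t T T' _ IH /tscalar_tequiv <- _ ctxG /(IH ctxG) //
                   |G t r a b U T tyt _ tyr _ ctxG /orP[t0|r0]
                   |G t T U _ IH unitU ctxG /(IH ctxG)
                   |G t T _ IH /is_context_tlift/IH //
                   |G t t' T _ IH /term_ac_zero[_ <-] ctxG /(IH ctxG) //].
- have /= := typing_zero_tscalar tyt t0; rewrite mulr1 => ->.
  by rewrite !mul0r.
- have /andP[unitU _] := typing_wf_type tyt ctxG.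
  have /= := typing_zero_tscalar tyr r0; rewrite tscalar_unit // mulr1 => ->.
  by rewrite mulr0 mul0r.
- by rewrite tscalar_tsubst.
Qed.

End ScalarFactor.

Theorem mainTheorem9 (S : comPzRingType) (t : sterm S) (G : scontext S) (T : stype S) :
  is_context G -> wf_type T ->
  (typing G (App (Zero S) t) T -> tequiv T (TZero S)) /\
  (typing G (App t (Zero S)) T -> tequiv T (TZero S)).
Proof.
move=> ctxG _; split=> tyT; apply/tequiv_zero_of_tscalar0;
  apply: (typing_zero_app_tscalar tyT ctxG) => /=.
- by [].
- by rewrite orbT.
Qed.
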